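(* Let $A,B$ be disjoint sets of vertices of a graph $G$ and let $\mathcal{Q}$ be a collection of $k$ pairwise edge-disjoint $AB$-paths. Then the union of the members of $\mathcal{Q}$ contains a collection of $k$ pairwise edge-disjoint $AB$-paths which is aligned.
   Context: All graphs are finite and loopless but may have parallel edges. For disjoint $A,B\subseteq V(G)$, an $AB$-path is a path with one end in $A$ and the other end in $B$; it is written $x_1,x_2,\ldots,x_s$ with $x_1\in A$, $x_s\in B$. Two edge-disjoint $AB$-paths $Q_1=x_1,\ldots,x_s$ and $Q_2=y_1,\ldots,y_t$ which share two internal vertices $u=x_{i_1}=y_{j_1}$ and $v=x_{i_2}=y_{j_2}$ are aligned with respect to $u$ and $v$ if $(i_1-i_2)(j_1-j_2)>0$. Two such paths are aligned if they are aligned with respect to every pair of internal vertices in which they intersect; a collection of paths is aligned if its members are pairwise aligned. *)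

From mathcomp Require Import all_boot all_order all_algebra.
Set Implicit Arguments. Unset Strict Implicit. Unset Printing Implicit Defensive.
Import Order.TTheory GRing.Theory Num.Theory.

(* A finite loopless multigraph: vertex type V, edge type E (both finite),
   [ends e] = the pair of end vertices of edge e.  Parallel edges are allowed
   (distinct edges may have the same ends). *)
Definition loopless (V E : finType) (ends : E -> V * V) : Prop :=
  forall e : E, (ends e).1 != (ends e).2.

Definition joins (V E : finType) (ends : E -> V * V) (e : E) (x y : V) : bool :=
  (ends e == (x, y)) || (ends e == (y, x)).

(* A walk/path x_1, e_1, x_2, ..., e_{s-1}, x_s is stored as its first vertex
   x_1 and the list of steps (e_i, x_{i+1}). *)
Record gpath (V E : Type) := GPath { gstart : V; gsteps : seq (E * V) }.

Definition gverts (V E : Type) (P : gpath V E) : seq V :=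
  gstart P :: map snd (gsteps P).
Definition gedges (V E : Type) (P : gpath V E) : seq E := map fst (gsteps P).
Definition glast (V E : Type) (P : gpath V E) : V := last (gstart P) (map snd (gsteps P)).

Fixpoint is_walk_from (V E : finType) (ends : E -> V * V) (x : V)
    (s : seq (E * V)) : bool :=
  match s with
  | [::] => true
  | (e, y) :: s' => joins ends e x y && is_walk_from ends y s'
  end.

Definition is_gpath (V E : finType) (ends : E -> V * V) (P : gpath V E) : bool :=
  is_walk_from ends (gstart P) (gsteps P) && uniq (gverts P).

Definition is_ABpath (V E : finType) (ends : E -> V * V) (A B : {set V})
    (P : gpath V E) : bool :=
  [&& is_gpath ends P, gstart P \in A & glast P \in B].

Definition edge_disjoint (V E : finType) (P Q : gpath V E) : bool :=
  [disjoint gedges P & gedges Q].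

Definition pairwise_edge_disjoint (V E : finType) (k : nat)
    (Q : 'I_k -> gpath V E) : Prop :=
  forall i j : 'I_k, i != j -> edge_disjoint (Q i) (Q j).

(* u is an internal vertex of P: u = x_i with 1 < i < s (1-based) *)
Definition internal (V E : finType) (u : V) (P : gpath V E) : bool :=
  [&& u \in gverts P, 0 < index u (gverts P) & index u (gverts P) < (size (gverts P)).-1].

(* Positions are 0-based here; only differences matter. *)
Definition aligned (V E : finType) (P Q : gpath V E) : Prop :=
  forall u v : V, u != v ->
    internal u P -> internal u Q -> internal v P -> internal v Q ->
    (0 < ((index u (gverts P))%:Z - (index v (gverts P))%:Z)
         * ((index u (gverts Q))%:Z - (index v (gverts Q))%:Z))%R.

Definition aligned_family (V E : finType) (k : nat) (Q : 'I_k -> gpath V E) : Prop :=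
  forall i j : 'I_k, i != j -> aligned (Q i) (Q j).

From mathcomp Require Import all_boot all_order all_algebra.
From mathcomp Require Import zify.
Set Implicit Arguments. Unset Strict Implicit. Unset Printing Implicit Defensive.
Import GRing.Theory Num.Theory.

(* Among all families of k pairwise edge-disjoint AB-paths lying in the union
   of the given ones, take one of minimal total length.  If two of its paths
   P, R cross, i.e. meet u before v on P but v before u on R, then replacing
   them by a path inside P[..u] R[u..] and one inside R[..v] P[v..]
   keeps the family edge-disjoint (the four pieces are pairwise edge-disjoint)
   and strictly shortens it.  Hence a minimal family has no crossing pair,
   which is stronger than being aligned. *)

Lemma last_take (T : Type) (x : T) (s : seq T) p :
  p <= size s -> last x (take p s) = nth x (x :: s) p.
Proof.
move=> le_p; rewrite (last_nth x) size_takel //.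
by rewrite -[x :: take p s]/(take p.+1 (x :: s)) nth_take.
Qed.

Lemma subz_mul_gt0 (a b c d : nat) : a < b -> c < d ->
  (0 < (a%:Z - b%:Z) * (c%:Z - d%:Z))%R.
Proof. by move=> lt_ab lt_cd; rewrite -mulrNN !opprB mulr_gt0 // subr_gt0 ltz_nat. Qed.

Lemma disjoint_take_drop (T : finType) (s : seq T) a b :
  uniq s -> a <= b -> [disjoint take a s & drop b s].
Proof.
move=> uniq_s le_ab; rewrite -(take_takel s le_ab).
have sub : take a (take b s) \subset take b s by apply/subsetP => x /mem_take.
apply: disjointWl sub _.
move: uniq_s; rewrite -{1}(cat_take_drop b s) cat_uniq => /and3P [_ + _].
by rewrite disjoint_sym disjoint_has.
Qed.

Section Walks.

Variables (V E : finType) (ends : E -> V * V).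

Lemma is_walk_from_cat x s1 s2 :
  is_walk_from ends x (s1 ++ s2) =
  is_walk_from ends x s1 && is_walk_from ends (last x (map snd s1)) s2.
Proof. by elim: s1 x => [|[e y] s1 IHs] x //=; rewrite IHs andbA. Qed.

Lemma is_walk_from_take_drop x s p :
  is_walk_from ends x s =
  is_walk_from ends x (take p s) &&
  is_walk_from ends (last x (map snd (take p s))) (drop p s).
Proof. by rewrite -is_walk_from_cat cat_take_drop. Qed.

Lemma shorten_walk x s :
  is_walk_from ends x s ->
  exists t, [/\ is_walk_from ends x t, uniq (x :: map snd t),
    last x (map snd t) = last x (map snd s), {subset t <= s} & size t <= size s].
Proof.
elim: s x => [|[e y] s IHs] x /=; first by exists [::].
case/andP => exy /IHs [t [walk_t uniq_t last_t sub_t size_t]].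
have sub_cons : {subset t <= (e, y) :: s}.
  by move=> z /sub_t; rewrite in_cons => ->; rewrite orbT.
have [eq_xy|neq_xy] := eqVneq x y.
  by subst x; exists t; split; rewrite ?leqW.
have [xt|xNt] := boolP (x \in map snd t); last first.
  exists ((e, y) :: t); split => //=; first by rewrite exy.
  - by rewrite in_cons negb_or neq_xy xNt.
  - by move=> z; rewrite !in_cons => /orP [->|/sub_t ->]; rewrite ?orbT.
pose n := index x (map snd t).
have lt_n : n < size (map snd t) by rewrite index_mem.
have last_xt : last y (map snd (take n.+1 t)) = x.
  by rewrite map_take last_take //= nth_index.
exists (drop n.+1 t); split.
- by move: walk_t; rewrite (is_walk_from_take_drop _ _ n.+1) last_xt => /andP [].
- have -> : (x \notin map snd (drop n.+1 t)) && uniq (map snd (drop n.+1 t)) =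
      uniq (drop n (map snd t)).
    by rewrite (drop_nth x lt_n) nth_index // map_drop.
  by apply: drop_uniq; case/andP: uniq_t.
- by rewrite -last_t -{2}(cat_take_drop n.+1 t) map_cat last_cat last_xt.
- by move=> z /mem_drop /sub_cons.
- by rewrite size_drop (leq_trans (leq_subr _ _)) // leqW.
Qed.

Lemma is_walk_from_ends_mem x s e :
  is_walk_from ends x s -> e \in map fst s ->
  ((ends e).1 \in x :: map snd s) && ((ends e).2 \in x :: map snd s).
Proof.
elim: s x => [|[e0 y] s IHs] x //= /andP [join0 walk_s].
rewrite in_cons => /orP [/eqP ->|/(IHs _ walk_s) /andP [e1 e2]].
  by case/orP: join0 => /eqP -> /=; rewrite !in_cons !eqxx !orbT.
by rewrite (in_cons x) e1 (in_cons x) e2 !orbT.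
Qed.

Lemma is_walk_from_uniq_edges x s :
  is_walk_from ends x s -> uniq (x :: map snd s) -> uniq (map fst s).
Proof.
elim: s x => [|[e y] s IHs] x //= /andP [join_e walk_s] /andP [xNs uniq_s].
rewrite (IHs y) // andbT; apply: contra xNs => /(is_walk_from_ends_mem walk_s).
by case/orP: join_e => /eqP -> /andP [].
Qed.

Lemma gpath_uniq_edges (P : gpath V E) : is_gpath ends P -> uniq (gedges P).
Proof. by case/andP; apply: is_walk_from_uniq_edges. Qed.

Lemma index_gverts_le (P : gpath V E) x :
  x \in gverts P -> index x (gverts P) <= size (gsteps P).
Proof. by rewrite -index_mem /gverts /= size_map ltnS. Qed.

Lemma last_take_index (P : gpath V E) u : u \in gverts P ->
  last (gstart P) (map snd (take (index u (gverts P)) (gsteps P))) = u.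
Proof.
move=> uP; rewrite map_take last_take ?size_map ?index_gverts_le //.
exact: nth_index.
Qed.

Lemma last_drop_index (P : gpath V E) u : u \in gverts P ->
  last u (map snd (drop (index u (gverts P)) (gsteps P))) = glast P.
Proof.
by move=> uP; rewrite -{1}(last_take_index uP) -last_cat -map_cat cat_take_drop.
Qed.

End Walks.

Section Uncrossing.

Variables (V E : finType) (ends : E -> V * V) (A B : {set V}).

Lemma ABpath_splice (P R : gpath V E) u :
  is_ABpath ends A B P -> is_ABpath ends A B R ->
  u \in gverts P -> u \in gverts R ->
  exists W : gpath V E, [/\ is_ABpath ends A B W,
    gedges W \subset take (index u (gverts P)) (gedges P)
                     ++ drop (index u (gverts R)) (gedges R),
    gverts W \subset gverts P ++ gverts R
  & size (gsteps W) + index u (gverts R) <= index u (gverts P) + size (gsteps R)].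
Proof.
move=> /and3P [/andP [walk_P _] AP BP] /and3P [/andP [walk_R _] _ BR] uP uR.
have walk_PR : is_walk_from ends (gstart P)
    (take (index u (gverts P)) (gsteps P) ++ drop (index u (gverts R)) (gsteps R)).
  rewrite is_walk_from_cat last_take_index //.
  move: walk_P walk_R.
  rewrite (is_walk_from_take_drop _ _ (gsteps P) (index u (gverts P))).
  rewrite (is_walk_from_take_drop _ _ (gsteps R) (index u (gverts R))).
  by rewrite !last_take_index // => /andP [-> _] /andP [_ ->].
have [t [walk_t uniq_t last_t sub_t size_t]] := shorten_walk walk_PR.
exists (GPath (gstart P) t); split.
- apply/and3P; split => //; first exact/andP.
  rewrite /glast /= last_t map_cat last_cat.
  by rewrite last_take_index // last_drop_index.
- apply/subsetP => e /(sub_map sub_t).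
  by rewrite /gedges map_cat map_take map_drop.
- apply/subsetP => x; rewrite /gverts /= !(in_cons, mem_cat).
  case/orP => [->//|/(sub_map sub_t)].
  by rewrite map_cat map_take map_drop mem_cat => /orP [/mem_take|/mem_drop] ->;
    rewrite !orbT.
- move: size_t (index_gverts_le uR); rewrite [gsteps (GPath _ _)]/=.
  by rewrite size_cat size_drop size_takel ?(index_gverts_le uP); lia.
Qed.

Definition crossing (P R : gpath V E) : bool :=
  [exists u, exists v, [&& u \in gverts P, v \in gverts P, u \in gverts R,
     v \in gverts R, index u (gverts P) < index v (gverts P)
   & index v (gverts R) < index u (gverts R)]].

Lemma uncross (P R : gpath V E) :
  is_ABpath ends A B P -> is_ABpath ends A B R -> edge_disjoint P R ->
  crossing P R ->
  exists W1 W2 : gpath V E, [/\ is_ABpath ends A B W1 /\ is_ABpath ends A B W2,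
    edge_disjoint W1 W2,
    (gedges W1 \subset gedges P ++ gedges R) /\ (gedges W2 \subset gedges P ++ gedges R),
    (gverts W1 \subset gverts P ++ gverts R) /\ (gverts W2 \subset gverts P ++ gverts R)
  & size (gsteps W1) + size (gsteps W2) < size (gsteps P) + size (gsteps R)].
Proof.
move=> pathP pathR disjPR /existsP [u /existsP [v /and5P [uP vP uR vR /andP [uv vu]]]].
have [W1 [path1 edges1 verts1 size1]] := ABpath_splice pathP pathR uP uR.
have [W2 [path2 edges2 verts2 size2]] := ABpath_splice pathR pathP vR vP.
have [/gpath_uniq_edges uniqP _ _] := and3P pathP.
have [/gpath_uniq_edges uniqR _ _] := and3P pathR.
have take_sub n (s : seq E) : take n s \subset s by apply/subsetP => e /mem_take.
have drop_sub n (s : seq E) : drop n s \subset s by apply/subsetP => e /mem_drop.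
exists W1, W2; split => //.
- apply: (disjointW edges1 edges2).
  rewrite !disjoint_cat ![[disjoint _ & _ ++ _]]disjoint_sym !disjoint_cat -!andbA.
  apply/and4P; split.
  + by apply: disjointW (take_sub _ _) (take_sub _ _) _; rewrite disjoint_sym.
  + by rewrite disjoint_sym disjoint_take_drop // ltnW.
  + by rewrite disjoint_take_drop // ltnW.
  + exact: disjointW (drop_sub _ _) (drop_sub _ _) disjPR.
- split; apply/subsetP => e; [move/(subsetP edges1)|move/(subsetP edges2)];
    by rewrite !mem_cat => /orP [/mem_take|/mem_drop] ->; rewrite ?orbT.
- split => //; apply/subsetP => x /(subsetP verts2).
  by rewrite !mem_cat => /orP [] ->; rewrite ?orbT.
- by clear -size1 size2 uv vu; lia.
Qed.

Lemma aligned_of_noncrossing (P R : gpath V E) : ~~ crossing P R -> aligned P R.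
Proof.
move=> noncross u v neq_uv /and3P [uP _ _] /and3P [uR _ _] /and3P [vP _ _] /and3P [vR _ _].
have no_cross x y : x \in gverts P -> y \in gverts P -> x \in gverts R -> y \in gverts R ->
    index x (gverts P) < index y (gverts P) -> index y (gverts R) < index x (gverts R) -> False.
  move=> xP yP xR yR xy yx; move/negP: noncross; apply; apply/existsP; exists x.
  by apply/existsP; exists y; rewrite xP yP xR yR xy yx.
have neq_index (Q : gpath V E) : u \in gverts Q -> v \in gverts Q ->
    index u (gverts Q) != index v (gverts Q).
  by move=> uQ vQ; apply: contra neq_uv => /eqP /(index_inj u uQ vQ) ->.
have neqP := neq_index P uP vP; have neqR := neq_index R uR vR.
case: (ltngtP (index u (gverts P))) neqP => [ltP|gtP|->]; rewrite ?eqxx // => _.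
  case: (ltngtP (index u (gverts R))) neqR => [ltR|gtR|->]; rewrite ?eqxx // => _.
    exact: subz_mul_gt0.
  by case: (no_cross u v uP vP uR vR ltP gtR).
case: (ltngtP (index u (gverts R))) neqR => [ltR|gtR|->]; rewrite ?eqxx // => _.
  by case: (no_cross v u vP uP vR uR gtP ltR).
by rewrite -mulrNN !opprB subz_mul_gt0.
Qed.

End Uncrossing.

Section Families.

Variables (V E : finType) (ends : E -> V * V) (A B : {set V}) (k : nat).
Implicit Types Q : 'I_k -> gpath V E.

Definition ABlinkage Q :=
  (forall i, is_ABpath ends A B (Q i)) /\ pairwise_edge_disjoint Q.

Definition lies_in_union Q' Q :=
  (forall i e, e \in gedges (Q' i) -> exists j, e \in gedges (Q j)) /\
  (forall i x, x \in gverts (Q' i) -> exists j, x \in gverts (Q j)).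

Definition total_length Q := \sum_(l < k) size (gsteps (Q l)).

Definition replace2 Q (i j : 'I_k) (P R : gpath V E) : 'I_k -> gpath V E :=
  fun l => if l == i then P else if l == j then R else Q l.

Lemma lies_in_union_trans Q1 Q2 Q3 :
  lies_in_union Q1 Q2 -> lies_in_union Q2 Q3 -> lies_in_union Q1 Q3.
Proof.
move=> [edges12 verts12] [edges23 verts23]; split.
  by move=> i e /edges12 [j /edges23].
by move=> i x /verts12 [j /verts23].
Qed.

Lemma total_length_replace2 Q i j P R : i != j ->
  total_length (replace2 Q i j P R) + size (gsteps (Q i)) + size (gsteps (Q j)) =
  total_length Q + size (gsteps P) + size (gsteps R).
Proof.
move=> neq_ij; have neq_ji : j != i by rewrite eq_sym.
rewrite /total_length (bigD1 i) // (bigD1 j) //= [in RHS](bigD1 i) // [in RHS](bigD1 j) //=.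
rewrite (eq_bigr (fun l => size (gsteps (Q l)))) => [|l /andP [li lj]]; last first.
  by rewrite /replace2 (negbTE li) (negbTE lj).
rewrite /replace2 eqxx (negbTE neq_ji) eqxx.
set rest := \sum_(_ < k | _) _; lia.
Qed.

Lemma replace2_edge_disjoint Q i j P R :
  pairwise_edge_disjoint Q -> i != j -> edge_disjoint P R ->
  gedges P \subset gedges (Q i) ++ gedges (Q j) ->
  gedges R \subset gedges (Q i) ++ gedges (Q j) ->
  pairwise_edge_disjoint (replace2 Q i j P R).
Proof.
move=> disjQ neq_ij disjPR subP subR.
have disj_other m : m != i -> m != j ->
    [disjoint gedges (Q i) ++ gedges (Q j) & gedges (Q m)].
  by move=> mi mj; rewrite disjoint_cat; apply/andP; split; apply: disjQ; rewrite eq_sym.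
have sub_ij l : (l == i) || (l == j) ->
    gedges (replace2 Q i j P R l) \subset gedges (Q i) ++ gedges (Q j).
  by rewrite /replace2; case: (l == i) => //= ->.
have other l : ~~ ((l == i) || (l == j)) -> replace2 Q i j P R l = Q l.
  by rewrite /replace2 negb_or => /andP [/negbTE -> /negbTE ->].
suff half l m : l != m -> (l == i) || (l == j) ->
    edge_disjoint (replace2 Q i j P R l) (replace2 Q i j P R m).
  move=> l m lm; have [lij|lNij] := boolP ((l == i) || (l == j)); first exact: half.
  have [mij|mNij] := boolP ((m == i) || (m == j)).
    by rewrite /edge_disjoint disjoint_sym; apply: half; rewrite // eq_sym.
  by rewrite !other //; apply: disjQ.
move=> lm lij; have [mij|mNij] := boolP ((m == i) || (m == j)).
  have at_i : replace2 Q i j P R i = P by rewrite /replace2 eqxx.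
  have at_j : replace2 Q i j P R j = R by rewrite /replace2 eq_sym (negbTE neq_ij) eqxx.
  move: lm; case/orP: lij => /eqP ->; case/orP: mij => /eqP ->; rewrite ?eqxx // => _.
    by rewrite at_i at_j.
  by rewrite at_i at_j /edge_disjoint disjoint_sym.
rewrite (other m mNij) /edge_disjoint; apply: disjointWl (sub_ij l lij) _.
by move: mNij; rewrite negb_or => /andP [mi mj]; apply: disj_other.
Qed.

Lemma replace2_lies_in_union Q i j P R :
  gedges P \subset gedges (Q i) ++ gedges (Q j) ->
  gedges R \subset gedges (Q i) ++ gedges (Q j) ->
  gverts P \subset gverts (Q i) ++ gverts (Q j) ->
  gverts R \subset gverts (Q i) ++ gverts (Q j) ->
  lies_in_union (replace2 Q i j P R) Q.
Proof.
move=> /subsetP edgesP /subsetP edgesR /subsetP vertsP /subsetP vertsR.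
have from_ij (T : finType) (f : gpath V E -> seq T) y :
    y \in f (Q i) ++ f (Q j) -> exists l, y \in f (Q l).
  by rewrite mem_cat => /orP [] ?; [exists i|exists j].
split=> l y; rewrite /replace2;
  (case: ifP => _; last case: ifP => _; last by exists l).
- by move/edgesP/from_ij.
- by move/edgesR/from_ij.
- by move/vertsP/from_ij.
- by move/vertsR/from_ij.
Qed.

Lemma uncross_family Q i j :
  ABlinkage Q -> i != j -> crossing (Q i) (Q j) ->
  exists Q', [/\ ABlinkage Q', lies_in_union Q' Q & total_length Q' < total_length Q].
Proof.
move=> [pathQ disjQ] neq_ij cross_ij.
have [W1 [W2 [[path1 path2] disj12 [edges1 edges2] [verts1 verts2] size12]]] :=
  uncross (pathQ i) (pathQ j) (disjQ i j neq_ij) cross_ij.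
exists (replace2 Q i j W1 W2); split.
- split; last exact: replace2_edge_disjoint.
  by move=> l; rewrite /replace2; case: ifP => _; [|case: ifP].
- exact: replace2_lies_in_union.
- have len := total_length_replace2 Q W1 W2 neq_ij.
  by clear -len size12; lia.
Qed.

Lemma aligned_refinement Q : ABlinkage Q ->
  exists Q', [/\ ABlinkage Q', lies_in_union Q' Q & aligned_family Q'].
Proof.
have [n] := ubnP (total_length Q); elim: n Q => // n IHn Q lenQ linkQ.
have [|noncross] := boolP [exists i, exists j, (i != j) && crossing (Q i) (Q j)].
  case/existsP => i /existsP [j /andP [neq_ij cross_ij]].
  have [Q2 [link2 in2 len2]] := uncross_family linkQ neq_ij cross_ij.
  have [Q' [link' in' aligned']] := IHn Q2 (leq_trans len2 lenQ) link2.
  by exists Q'; split => //; apply: lies_in_union_trans in' in2.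
exists Q; split => //; first by split => l ? ?; exists l.
move=> i j neq_ij; apply: aligned_of_noncrossing; apply: contraNN noncross => cross_ij.
by apply/existsP; exists i; apply/existsP; exists j; rewrite neq_ij.
Qed.

End Families.

Theorem lemma7p1 (V E : finType) (ends : E -> V * V) (Hll : loopless ends)
    (A B : {set V}) (HAB : [disjoint A & B])
    (k : nat) (Q : 'I_k -> gpath V E)
    (HQ : forall i, is_ABpath ends A B (Q i))
    (HQd : pairwise_edge_disjoint Q) :
  exists Q' : 'I_k -> gpath V E,
    [/\ forall i, is_ABpath ends A B (Q' i),
        pairwise_edge_disjoint Q',
        forall i e, e \in gedges (Q' i) -> exists j, e \in gedges (Q j),
        forall i x, x \in gverts (Q' i) -> exists j, x \in gverts (Q j)
      & aligned_family Q'].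
Proof.
have [Q' [[paths' disj'] [edges' verts'] aligned']] :=
  aligned_refinement (conj HQ HQd : ABlinkage ends A B Q).
by exists Q'.
Qed.
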